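(* Let $i\in\mathbb Z_{\ge0}$, $J\in\mathbb Z_{>0}$, $j\in\mathbb Z$. If $j<0$ or $j>J$ then $W_J(i,j;i+j-J,J\mid v,\lambda)=0$. If $0\le j\le J$ then $$W_J(i,j;i+j-J,J\mid v,\lambda)=f(2\eta)^{j-J}\frac{[2\eta J]_J}{[2\eta(J-j)]_{J-j}[2\eta j]_j}\frac{[2\eta i]_{J-j}[2\eta(i+j-J)-\eta\Lambda-v]_j[2\eta(\Lambda-i-j+J)]_{J-j}}{[\eta\Lambda-v]_J}$$ $$\times\frac{[\lambda+2\eta(i+j-J)-\eta\Lambda-v]_{J-j}\,[\lambda+2\eta(i+2j-J-\Lambda-1)]_j}{[\lambda+2\eta j]_{J-j}\,[\lambda+2\eta(2j-J-1)]_j}.$$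
   Context: Fix $\eta,\tau\in\mathbb C$, $\operatorname{Im}\tau>0$. $f(z)$ denotes either $\theta(z)=-\sum_{j\in\mathbb Z}\exp\big(\pi\mathbf i\tau(j+\tfrac12)^2+2\pi\mathbf i(j+\tfrac12)(z+\tfrac12)\big)$ or $\sin(\pi z)$. Elliptic Pochhammer: $[a]_k=\prod_{m=0}^{k-1}f(a-2\eta m)$ for $k\ge0$, $[a]_k=\prod_{m=1}^{-k}f(a+2\eta m)^{-1}$ for $k<0$. Unfused weights ($k\ge0$): $W_1(k,0;k,0\mid v,\lambda,\Lambda)=\frac{f(\eta(\Lambda-2k)-v)f(\lambda+2k\eta)}{f(\eta\Lambda-v)f(\lambda)}$, $W_1(k,1;k+1,0\mid\cdot)=\frac{f(v+\lambda+\eta(2k+2-\Lambda))f(2\eta)}{f(\eta\Lambda-v)f(\lambda)}$, $W_1(k,0;k-1,1\mid\cdot)=\frac{f(\lambda-v+\eta(2k-2-\Lambda))f(2\eta(\Lambda+1-k))f(2k\eta)}{f(\eta\Lambda-v)f(\lambda)f(2\eta)}$ ($k\ge1$), $W_1(k,1;k,1\mid\cdot)=\frac{f(\eta(2k-\Lambda)-v)f(\lambda+2\eta(k-\Lambda))}{f(\eta\Lambda-v)f(\lambda)}$, and $0$ otherwise. Column weights: for $\mathcal J_1=(j_{1,k})_{k=1}^J,\mathcal J_2=(j_{2,k})_{k=1}^J\in\{0,1\}^J$, $i^{(1)}=i_1$, $i^{(k+1)}=i^{(k)}+j_{1,k}-j_{2,k}$, $\Phi_J=\lambda$, $\Phi_k=\Phi_{k+1}\mp2\eta$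 according as $j_{1,k+1}=0$ or $1$; $W_J(i_1,\mathcal J_1;i_2,\mathcal J_2\mid v,\lambda)=\prod_{k=1}^JW_1(i^{(k)},j_{1,k};i^{(k+1)},j_{2,k}\mid v+2\eta(k-1),\Phi_k,\Lambda)$ if all $i^{(k)}\ge0$ and $i^{(J+1)}=i_2$, else $0$ (in particular weights with a negative vertical argument vanish). Fused weight: $W_J(i_1,j_1;i_2,j_2\mid v,\lambda)=\sum_{|\mathcal J_1|=j_1}W_J(i_1,\mathcal J_1;i_2,\mathcal K\mid v,\lambda)$ for any $\mathcal K$ with $|\mathcal K|=j_2$ (independent of $\mathcal K$); $\Lambda$ is suppressed. *)

From Stdlib Require Import Reals ZArith List ClassicalEpsilon.
Import ListNotations.
Open Scope R_scope.

Record CC : Type := mkC { Re : R ; Im : R }.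

Definition CC0 : CC := mkC 0 0.
Definition CC1 : CC := mkC 1 0.
Definition Ci : CC := mkC 0 1.
Definition Cadd (z w : CC) : CC := mkC (Re z + Re w) (Im z + Im w).
Definition Copp (z : CC) : CC := mkC (- Re z) (- Im z).
Definition Csub (z w : CC) : CC := Cadd z (Copp w).
Definition Cmul (z w : CC) : CC :=
  mkC (Re z * Re w - Im z * Im w) (Re z * Im w + Im z * Re w).
(* total inverse: Cinv 0 = 0 *)
Definition Cinv (z : CC) : CC :=
  let d := Re z * Re z + Im z * Im z in mkC (Re z / d) (- Im z / d).
Definition Cdiv (z w : CC) : CC := Cmul z (Cinv w).
Definition RtoC (x : R) : CC := mkC x 0.
Definition ZtoC (n : Z) : CC := RtoC (IZR n).
Fixpoint Cpow (z : CC) (n : nat) : CC :=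
  match n with O => CC1 | S n => Cmul z (Cpow z n) end.
Definition Cpowz (z : CC) (n : Z) : CC :=
  if (0 <=? n)%Z then Cpow z (Z.to_nat n) else Cinv (Cpow z (Z.to_nat (- n))).
Definition Cexp (z : CC) : CC :=
  mkC (exp (Re z) * cos (Im z)) (exp (Re z) * sin (Im z)).
Definition Cpi : CC := RtoC PI.

Declare Scope C_scope.
Delimit Scope C_scope with CC.
Bind Scope C_scope with CC.
Infix "+" := Cadd : C_scope.
Infix "-" := Csub : C_scope.
Infix "*" := Cmul : C_scope.
Infix "/" := Cdiv : C_scope.
Notation "- x" := (Copp x) : C_scope.

Open Scope C_scope.

Definition Csum (l : list CC) : CC := fold_right Cadd CC0 l.

Definition Ccv (u : nat -> CC) (l : CC) : Prop :=
  Un_cv (fun n => Re (u n)) (Re l) /\ Un_cv (fun n => Im (u n)) (Im l).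

Definition Csin (z : CC) : CC :=
  (Cexp (Ci * z) - Cexp (- (Ci * z))) / (ZtoC 2 * Ci).

Definition theta_term (tau z : CC) (j : Z) : CC :=
  let h := ZtoC j + RtoC (/ 2) in
  Cexp (Cpi * Ci * tau * (h * h) + ZtoC 2 * Cpi * Ci * h * (z + RtoC (/ 2))).

Definition theta_partial (tau z : CC) (N : nat) : CC :=
  Csum (map (fun k => theta_term tau z (Z.of_nat k - Z.of_nat N)%Z)
            (seq 0 (2 * N + 1))).

(** theta(z) = - sum_{j in Z} theta_term; the sum is the limit of the
    symmetric partial sums (it converges absolutely for Im tau > 0). *)
Definition theta (tau z : CC) : CC :=
  - epsilon (inhabits CC0) (fun l => Ccv (theta_partial tau z) l).

Inductive fkind : Type := FTheta | FSin.

Definition fval (fk : fkind) (tau z : CC) : CC :=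
  match fk with
  | FTheta => theta tau z
  | FSin => Csin (Cpi * z)
  end.

Fixpoint Cprod_nat (n : nat) (g : nat -> CC) : CC :=
  match n with O => CC1 | S n => Cprod_nat n g * g n end.

Definition poch (f : CC -> CC) (eta a : CC) (k : Z) : CC :=
  if (0 <=? k)%Z then
    Cprod_nat (Z.to_nat k) (fun m => f (a - ZtoC 2 * eta * ZtoC (Z.of_nat m)))
  else
    Cprod_nat (Z.to_nat (- k))
      (fun m => Cinv (f (a + ZtoC 2 * eta * ZtoC (Z.of_nat m + 1)))).

Definition b2Z (b : bool) : Z := if b then 1%Z else 0%Z.

Definition W1 (f : CC -> CC) (eta : CC) (k : Z) (j1 : bool) (k2 : Z) (j2 : bool)
  (v lam Lam : CC) : CC :=
  let kC := ZtoC k in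
  let two := ZtoC 2 in
  let den := f (eta * Lam - v) * f lam in
  if (k <? 0)%Z then CC0 else
  match j1, j2 with
  | false, false =>
      if (k2 =? k)%Z then
        f (eta * (Lam - two * kC) - v) * f (lam + two * kC * eta) / den
      else CC0
  | true, false =>
      if (k2 =? k + 1)%Z then
        f (v + lam + eta * (two * kC + two - Lam)) * f (two * eta) / den
      else CC0
  | false, true =>
      if ((k2 =? k - 1)%Z && (1 <=? k)%Z)%bool then
        f (lam - v + eta * (two * kC - two - Lam))
          * f (two * eta * (Lam + CC1 - kC)) * f (two * kC * eta)
          / (den * f (two * eta))
      else CC0
  | true, true =>
      if (k2 =? k)%Z then
        f (eta * (two * kC - Lam) - v) * f (lam + two * eta * (kC - Lam)) / den
      else CC0
  end.

(** Phi for the entry whose upper part (entries k+1..J of J_1) is [tail]: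
    Phi_J = lam, Phi_k = Phi_{k+1} - 2 eta (if j_{1,k+1}=0) or + 2 eta (if 1). *)
Fixpoint Phi (eta lam : CC) (tail : list bool) : CC :=
  match tail with
  | [] => lam
  | b :: t => Phi eta lam t + (if b then ZtoC 2 * eta else - (ZtoC 2 * eta))
  end.

(** Lists are read bottom-up: the head is the entry k = 1.
    [i] is the current vertical value i^(k), [v] is v + 2 eta (k-1);
    the weight vanishes if some i^(k) (k = 1..J+1) is negative or if
    i^(J+1) <> i2, or if the lists have different lengths. *)
Fixpoint Wcol_aux (f : CC -> CC) (eta Lam lam : CC) (i2 : Z)
  (i : Z) (v : CC) (l1 l2 : list bool) : CC :=
  if (i <? 0)%Z then CC0 else
  match l1, l2 with
  | [], [] => if (i =? i2)%Z then CC1 else CC0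
  | b1 :: t1, b2 :: t2 =>
      let inext := (i + b2Z b1 - b2Z b2)%Z in
      W1 f eta i b1 inext b2 v (Phi eta lam t1) Lam
        * Wcol_aux f eta Lam lam i2 inext (v + ZtoC 2 * eta) t1 t2
  | _, _ => CC0
  end.

Definition Wcol (f : CC -> CC) (eta Lam : CC) (i1 : Z) (l1 : list bool) (i2 : Z)
  (l2 : list bool) (v lam : CC) : CC :=
  Wcol_aux f eta Lam lam i2 i1 v l1 l2.

Fixpoint bits (n : nat) : list (list bool) :=
  match n with
  | O => [[]]
  | S n => map (cons false) (bits n) ++ map (cons true) (bits n)
  end.

Definition ones (l : list bool) : Z := Z.of_nat (length (filter (fun b => b) l)).

(** Fused weight W_J(i1, j1; i2, j2 | v, lam): sum over J_1 with |J_1| = j1,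
    with the fixed representative K = (1,...,1,0,...,0) (j2 ones) for J_2. *)
Definition Wfused (f : CC -> CC) (eta Lam : CC) (J : nat) (i1 j1 i2 j2 : Z)
  (v lam : CC) : CC :=
  let K := repeat true (Z.to_nat j2) ++ repeat false (J - Z.to_nat j2) in
  Csum (map (fun l => Wcol f eta Lam i1 l i2 K v lam)
            (filter (fun l => (ones l =? j1)%Z) (bits J))).

(* Both choices of f satisfy a Riemann relation
     f(a + b) f(a - b) = A(a) B(b) - B(a) A(b):
   for the sine this is sin(x + y) sin(x - y) = sin^2 x - sin^2 y; for theta it
   comes from regrouping the absolutely convergent double series of
   theta(x + y) theta(x - y) according to the parity of the sum of the two
   summation indices.  The relation gives f(0) = 0 and a three-term identity.
   Peeling the bottom vertex off a column whose outgoing labels are all 1 writes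
   W_J(i, j; i + j - J, J) through W_(J-1) at (i - 1, j) and at (i, j - 1); the
   closed form obeys the same recursion by the three-term identity, and the
   claim follows by induction on J.  For j outside [0, J] no 0/1 column has j
   ones, so the fused sum is empty. *)

From Stdlib Require Import Reals ZArith List Lra Lia Field Permutation ClassicalEpsilon.
Import ListNotations.
Open Scope C_scope.

Lemma CC_eq (z w : CC) : Re z = Re w -> Im z = Im w -> z = w.
Proof. destruct z, w; simpl; intros; subst; reflexivity. Qed.

Lemma CC1_neq0 : CC1 <> CC0.
Proof. intro H. injection H. lra. Qed.

Lemma CC_field : field_theory CC0 CC1 Cadd Cmul Csub Copp Cdiv Cinv (@eq CC).
Proof.
  constructor; [constructor; intros; apply CC_eq; simpl; ring | exact CC1_neq0 | reflexivity |].
  intros [a b] Hab.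
  assert (a * a + b * b <> 0)%R.
  { intro E. apply Hab. assert (a = 0 /\ b = 0)%R as [-> ->] by nra. reflexivity. }
  apply CC_eq; simpl; field; auto.
Qed.

Add Field CCfield : CC_field.

Lemma ZtoC_add a b : ZtoC (a + b) = ZtoC a + ZtoC b.
Proof. apply CC_eq; simpl; rewrite ?plus_IZR; ring. Qed.
Lemma ZtoC_sub a b : ZtoC (a - b) = ZtoC a - ZtoC b.
Proof. apply CC_eq; simpl; rewrite ?minus_IZR; ring. Qed.
Lemma ZtoC_opp a : ZtoC (- a) = - ZtoC a.
Proof. apply CC_eq; simpl; rewrite ?opp_IZR; ring. Qed.
Lemma ZtoC_mul a b : ZtoC (a * b) = ZtoC a * ZtoC b.
Proof. apply CC_eq; simpl; rewrite ?mult_IZR; ring. Qed.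
Lemma ZtoC_0 : ZtoC 0 = CC0.
Proof. reflexivity. Qed.
Lemma ZtoC_1 : ZtoC 1 = CC1.
Proof. reflexivity. Qed.
Lemma ZtoC_2 : ZtoC 2 = CC1 + CC1.
Proof. apply CC_eq; simpl; ring. Qed.
Lemma ZtoC_of_nat_S n : ZtoC (Z.of_nat (S n)) = ZtoC (Z.of_nat n) + CC1.
Proof. rewrite Nat2Z.inj_succ, <- Z.add_1_r, ZtoC_add. reflexivity. Qed.
Lemma ZtoC_of_nat_add n m : ZtoC (Z.of_nat (n + m)) = ZtoC (Z.of_nat n) + ZtoC (Z.of_nat m).
Proof. rewrite Nat2Z.inj_add, ZtoC_add. reflexivity. Qed.

Lemma ZtoC_neq0 z : z <> 0%Z -> ZtoC z <> CC0.
Proof. intros H E. injection E. intros. apply H, eq_IZR. auto. Qed.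

Lemma Cmul_neq0 a b : a <> CC0 -> b <> CC0 -> a * b <> CC0.
Proof.
  intros Ha Hb E. apply Hb.
  transitivity (Cinv a * (a * b)); [field; auto | rewrite E; ring].
Qed.
Lemma Cinv_neq0 a : a <> CC0 -> Cinv a <> CC0.
Proof.
  intros Ha E. apply CC1_neq0.
  transitivity (a * Cinv a); [field; auto | rewrite E; ring].
Qed.
Lemma Cpow_neq0 c k : c <> CC0 -> Cpow c k <> CC0.
Proof. intros H; induction k; simpl; [apply CC1_neq0 | apply Cmul_neq0; auto]. Qed.
Lemma Cprod_nat_neq0 k g : (forall m, (m < k)%nat -> g m <> CC0) -> Cprod_nat k g <> CC0.
Proof. induction k; intros H; simpl; [apply CC1_neq0 | apply Cmul_neq0; auto]. Qed.

Lemma Cexp_add u w : Cexp (u + w) = Cexp u * Cexp w.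
Proof. apply CC_eq; simpl; rewrite ?exp_plus, ?cos_plus, ?sin_plus; ring. Qed.

Lemma Cexp_0 : Cexp CC0 = CC1.
Proof. apply CC_eq; simpl; rewrite ?exp_0, ?cos_0, ?sin_0; ring. Qed.

Lemma Cexp_opp_mul u : Cexp u * Cexp (- u) = CC1.
Proof. rewrite <- Cexp_add, <- Cexp_0. f_equal. ring. Qed.

Lemma Cexp_neq0 u : Cexp u <> CC0.
Proof. intro E. apply CC1_neq0. rewrite <- (Cexp_opp_mul u), E. ring. Qed.

Lemma Cexp_opp u : Cexp (- u) = Cinv (Cexp u).
Proof.
  pose proof (Cexp_neq0 u).
  transitivity (Cinv (Cexp u) * (Cexp u * Cexp (- u))); [field | rewrite Cexp_opp_mul; field]; auto.
Qed.

(* The only property of f that the recursion for the fused weights uses. *)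
Definition riemann_relation (f : CC -> CC) : Prop :=
  exists A B : CC -> CC, forall a b, f (a + b) * f (a - b) = A a * B b - B a * A b.

Lemma Csin_riemann_relation : riemann_relation (fun z => Csin (Cpi * z)).
Proof.
  set (e := fun z => Cexp (Ci * z)).
  (* A a = - cos(2 pi a) / 2 and B = 1: sin(pi(a+b)) sin(pi(a-b)) = sin^2(pi a) - sin^2(pi b). *)
  exists (fun a => - (e (Cpi * a) * e (Cpi * a) + Cinv (e (Cpi * a) * e (Cpi * a))) / ZtoC 4),
    (fun _ => CC1).
  assert (He_add : forall z w, e (z + w) = e z * e w).
  { intros; unfold e; rewrite <- Cexp_add; f_equal; ring. }
  assert (He_opp : forall z, e (- z) = Cinv (e z)).
  { intros; unfold e; replace (Ci * - z) with (- (Ci * z)) by ring; apply Cexp_opp. }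
  assert (HCsin : forall z, Csin z = (e z - Cinv (e z)) / (ZtoC 2 * Ci)).
  { intros; unfold Csin; fold (e z). rewrite Cexp_opp. reflexivity. }
  intros a b. rewrite !HCsin.
  replace (Cpi * (a + b)) with (Cpi * a + Cpi * b) by ring.
  replace (Cpi * (a - b)) with (Cpi * a + - (Cpi * b)) by ring.
  rewrite !He_add, He_opp.
  assert (Ha : e (Cpi * a) <> CC0) by apply Cexp_neq0.
  assert (Hb : e (Cpi * b) <> CC0) by apply Cexp_neq0.
  assert (Hi : Ci * Ci = - CC1) by (apply CC_eq; simpl; ring).
  assert (Ci <> CC0) by (intro H; injection H; lra).
  assert (ZtoC 2 <> CC0) by (apply ZtoC_neq0; lia).
  replace (ZtoC 4) with (ZtoC 2 * ZtoC 2) by (rewrite <- ZtoC_mul; reflexivity).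
  field [Hi]. repeat split; auto.
Qed.

Definition Cnorm1 (z : CC) : R := (Rabs (Re z) + Rabs (Im z))%R.

Lemma Cnorm1_ge0 z : (0 <= Cnorm1 z)%R.
Proof. unfold Cnorm1. pose proof (Rabs_pos (Re z)). pose proof (Rabs_pos (Im z)). lra. Qed.
Lemma Cnorm1_0 : Cnorm1 CC0 = 0%R.
Proof. unfold Cnorm1; simpl. rewrite Rabs_R0. ring. Qed.
Lemma Cnorm1_opp z : Cnorm1 (- z) = Cnorm1 z.
Proof. unfold Cnorm1; simpl. rewrite !Rabs_Ropp. auto. Qed.
Lemma Cnorm1_add z w : (Cnorm1 (z + w) <= Cnorm1 z + Cnorm1 w)%R.
Proof.
  unfold Cnorm1; simpl.
  pose proof (Rabs_triang (Re z) (Re w)). pose proof (Rabs_triang (Im z) (Im w)). lra.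
Qed.
Lemma Cnorm1_mul z w : (Cnorm1 (z * w) <= Cnorm1 z * Cnorm1 w)%R.
Proof.
  unfold Cnorm1; simpl.
  pose proof (Rabs_triang (Re z * Re w) (- (Im z * Im w))) as Hre.
  pose proof (Rabs_triang (Re z * Im w) (Im z * Re w)) as Him.
  rewrite Rabs_Ropp, !Rabs_mult in Hre. rewrite !Rabs_mult in Him.
  pose proof (Rabs_pos (Re z)). pose proof (Rabs_pos (Im z)).
  pose proof (Rabs_pos (Re w)). pose proof (Rabs_pos (Im w)). unfold Rminus. nra.
Qed.
Lemma Rabs_Re_le z : (Rabs (Re z) <= Cnorm1 z)%R.
Proof. unfold Cnorm1. pose proof (Rabs_pos (Im z)). lra. Qed.
Lemma Rabs_Im_le z : (Rabs (Im z) <= Cnorm1 z)%R.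
Proof. unfold Cnorm1. pose proof (Rabs_pos (Re z)). lra. Qed.

Lemma Cnorm1_Cexp w : (Cnorm1 (Cexp w) <= 2 * exp (Re w))%R.
Proof.
  unfold Cnorm1, Cexp; simpl. rewrite !Rabs_mult, (Rabs_right (exp _)) by (left; apply exp_pos).
  pose proof (COS_bound (Im w)). pose proof (SIN_bound (Im w)).
  assert (Rabs (cos (Im w)) <= 1)%R by (apply Rabs_le; lra).
  assert (Rabs (sin (Im w)) <= 1)%R by (apply Rabs_le; lra).
  pose proof (exp_pos (Re w)). nra.
Qed.

Lemma Csum_app l1 l2 : Csum (l1 ++ l2) = Csum l1 + Csum l2.
Proof. induction l1 as [|a l1 IH]; simpl; [ring | rewrite IH; ring]. Qed.

Section FiniteSums.
Context {A : Type}.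

Definition lsum (g : A -> CC) (l : list A) : CC := Csum (map g l).
Definition rsum (g : A -> R) (l : list A) : R := fold_right Rplus 0%R (map g l).

Lemma lsum_app g l1 l2 : lsum g (l1 ++ l2) = lsum g l1 + lsum g l2.
Proof. unfold lsum. rewrite map_app. apply Csum_app. Qed.
Lemma rsum_app g l1 l2 : rsum g (l1 ++ l2) = (rsum g l1 + rsum g l2)%R.
Proof. induction l1; unfold rsum in *; simpl; [ring | rewrite IHl1; ring]. Qed.
Lemma lsum_perm g l1 l2 : Permutation l1 l2 -> lsum g l1 = lsum g l2.
Proof. induction 1; unfold lsum in *; simpl; try congruence; ring. Qed.
Lemma rsum_perm g l1 l2 : Permutation l1 l2 -> rsum g l1 = rsum g l2.
Proof. induction 1; unfold rsum in *; simpl; try congruence; ring. Qed.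
Lemma lsum_ext_in g h l : (forall x, In x l -> g x = h x) -> lsum g l = lsum h l.
Proof. intros H; unfold lsum; f_equal; apply map_ext_in; auto. Qed.
Lemma rsum_ext_in g h l : (forall x, In x l -> g x = h x) -> rsum g l = rsum h l.
Proof. intros H; unfold rsum; f_equal; apply map_ext_in; auto. Qed.
Lemma rsum_le g h l : (forall x, In x l -> g x <= h x)%R -> (rsum g l <= rsum h l)%R.
Proof.
  induction l as [|a l IHl]; unfold rsum in *; simpl; intros H; [lra |].
  pose proof (H a (or_introl eq_refl)). pose proof (IHl (fun x Hx => H x (or_intror Hx))). lra.
Qed.
Lemma rsum_add g h l : rsum (fun x => g x + h x)%R l = (rsum g l + rsum h l)%R.
Proof. induction l; unfold rsum in *; simpl; [ring | rewrite IHl; ring]. Qed.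
Lemma lsum_sub g h l : lsum (fun x => g x - h x) l = lsum g l - lsum h l.
Proof. induction l; unfold lsum in *; simpl; [ring | rewrite IHl; ring]. Qed.
Lemma lsum_opp g l : lsum (fun x => - g x) l = - lsum g l.
Proof. induction l; unfold lsum in *; simpl; [ring | rewrite IHl; ring]. Qed.
Lemma lsum_scal c g l : lsum (fun x => c * g x) l = c * lsum g l.
Proof. induction l; unfold lsum in *; simpl; [ring | rewrite IHl; ring]. Qed.
Lemma rsum_scal c g l : rsum (fun x => c * g x)%R l = (c * rsum g l)%R.
Proof. induction l; unfold rsum in *; simpl; [ring | rewrite IHl; ring]. Qed.
Lemma Cnorm1_lsum g l : (Cnorm1 (lsum g l) <= rsum (fun x => Cnorm1 (g x)) l)%R.
Proof.
  induction l as [|a l IHl]; unfold lsum, rsum in *; simpl; [rewrite Cnorm1_0; lra |].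
  pose proof (Cnorm1_add (g a) (Csum (map g l))). lra.
Qed.
Lemma lsum_filter (P : A -> bool) g l :
  lsum (fun x => if P x then g x else CC0) l = lsum g (filter P l).
Proof.
  induction l as [|a l IHl]; unfold lsum in *; simpl; auto.
  rewrite IHl. destruct (P a); [auto | simpl; ring].
Qed.
Lemma rsum_filter (P : A -> bool) g l :
  rsum (fun x => if P x then g x else 0%R) l = rsum g (filter P l).
Proof.
  induction l as [|a l IHl]; unfold rsum in *; simpl; auto.
  rewrite IHl. destruct (P a); [auto | simpl; ring].
Qed.

End FiniteSums.

Lemma lsum_map {A B} (g : B -> CC) (h : A -> B) l : lsum g (map h l) = lsum (fun x => g (h x)) l.
Proof. unfold lsum; rewrite map_map; auto. Qed.

Lemma lsum_prod {A B} (u : A -> CC) (w : B -> CC) l1 l2 :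
  lsum (fun p => u (fst p) * w (snd p)) (list_prod l1 l2) = lsum u l1 * lsum w l2.
Proof.
  induction l1 as [|a l1 IHl1]; simpl; [unfold lsum; simpl; ring |].
  rewrite lsum_app, IHl1. unfold lsum at 1. rewrite map_map. simpl.
  fold (lsum (fun y => u a * w y) l2). rewrite lsum_scal. unfold lsum; simpl; ring.
Qed.
Lemma rsum_prod {A B} (u : A -> R) (w : B -> R) l1 l2 :
  rsum (fun p => u (fst p) * w (snd p))%R (list_prod l1 l2) = (rsum u l1 * rsum w l2)%R.
Proof.
  induction l1 as [|a l1 IHl1]; simpl; [unfold rsum; simpl; ring |].
  rewrite rsum_app, IHl1. unfold rsum at 1. rewrite map_map. simpl.
  fold (rsum (fun y => u a * w y)%R l2). rewrite rsum_scal. unfold rsum; simpl; ring.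
Qed.

Section IndexSets.
Context {A : Type}.
Hypothesis A_eq_dec : forall x y : A, {x = y} + {x <> y}.

Definition inb (l : list A) (x : A) : bool := if in_dec A_eq_dec x l then true else false.

Lemma lsum_as_indicator g X B :
  NoDup X -> NoDup B -> incl X B -> lsum g X = lsum (fun p => if inb X p then g p else CC0) B.
Proof.
  intros. rewrite lsum_filter. apply lsum_perm, NoDup_Permutation; auto using NoDup_filter.
  intros x. rewrite filter_In. unfold inb. destruct (in_dec A_eq_dec x X); intuition; discriminate.
Qed.
Lemma rsum_as_indicator g X B :
  NoDup X -> NoDup B -> incl X B -> rsum g X = rsum (fun p => if inb X p then g p else 0%R) B.
Proof.
  intros. rewrite rsum_filter. apply rsum_perm, NoDup_Permutation; auto using NoDup_filter.
  intros x. rewrite filter_In. unfold inb. destruct (in_dec A_eq_dec x X); intuition; discriminate.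
Qed.

Lemma Cnorm1_lsum_sub_le (g : A -> CC) (mu : A -> R) S X Y B :
  NoDup S -> NoDup X -> NoDup Y -> NoDup B ->
  incl S X -> incl S Y -> incl X B -> incl Y B ->
  (forall p, Cnorm1 (g p) <= mu p)%R ->
  (Cnorm1 (lsum g X - lsum g Y) <= rsum mu B - rsum mu S)%R.
Proof.
  intros HS HX HY HB SX SY XB YB Hmu.
  rewrite (lsum_as_indicator g X B), (lsum_as_indicator g Y B),
    (rsum_as_indicator mu S B), <- lsum_sub by eauto using incl_tran.
  eapply Rle_trans; [apply Cnorm1_lsum |].
  assert (E : (rsum mu B - rsum (fun p => if inb S p then mu p else 0) B =
               rsum (fun p => if inb S p then 0 else mu p) B)%R).
  { rewrite (rsum_ext_in mu (fun p => (if inb S p then mu p else 0) + (if inb S p then 0 else mu p))%R)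
      by (intros p _; destruct (inb S p); ring).
    rewrite rsum_add. ring. }
  rewrite E. apply rsum_le. intros p _.
  pose proof (Cnorm1_ge0 (g p)). specialize (Hmu p).
  assert (Hdiag : g p - g p = CC0) by ring. assert (Hr0 : g p - CC0 = g p) by ring.
  assert (Hl0 : CC0 - g p = - g p) by ring. assert (H00 : CC0 - CC0 = CC0) by ring.
  unfold inb; destruct (in_dec A_eq_dec p S) as [Hs|Hs];
    [destruct (in_dec A_eq_dec p X); [|exfalso; auto]; destruct (in_dec A_eq_dec p Y); [|exfalso; auto]
    | destruct (in_dec A_eq_dec p X), (in_dec A_eq_dec p Y)].
  all: rewrite ?Hdiag, ?Hr0, ?Hl0, ?H00, ?Cnorm1_opp, ?Cnorm1_0; lra.
Qed.

End IndexSets.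

Definition zrange (N : nat) : list Z :=
  map (fun k => (Z.of_nat k - Z.of_nat N)%Z) (seq 0 (2 * N + 1)).

Lemma In_zrange N k : In k (zrange N) <-> (- Z.of_nat N <= k <= Z.of_nat N)%Z.
Proof.
  unfold zrange. rewrite in_map_iff. split.
  - intros [x [<- Hx]]. apply in_seq in Hx. lia.
  - intros H. exists (Z.to_nat (k + Z.of_nat N)). split; [lia | apply in_seq; lia].
Qed.
Lemma NoDup_zrange N : NoDup (zrange N).
Proof. apply FinFun.Injective_map_NoDup; [intros a b H; lia | apply seq_NoDup]. Qed.
Lemma incl_zrange m n : (m <= n)%nat -> incl (zrange m) (zrange n).
Proof. intros H k. rewrite !In_zrange. lia. Qed.

Lemma zrange_S N : Permutation (zrange (S N)) (Z.of_nat (S N) :: (- Z.of_nat (S N))%Z :: zrange N).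
Proof.
  apply NoDup_Permutation; [apply NoDup_zrange | |].
  - constructor; [intros [H|H]; [lia | apply In_zrange in H; lia] |].
    constructor; [intros H; apply In_zrange in H; lia | apply NoDup_zrange].
  - intros x. rewrite In_zrange. simpl. rewrite In_zrange. lia.
Qed.
Lemma rsum_zrange_S (mu : Z -> R) N :
  rsum mu (zrange (S N)) = (mu (Z.of_nat (S N)) + mu (- Z.of_nat (S N))%Z + rsum mu (zrange N))%R.
Proof. rewrite (rsum_perm _ _ _ (zrange_S N)). unfold rsum; simpl. ring. Qed.

Lemma NoDup_list_prod {A B} (l1 : list A) (l2 : list B) :
  NoDup l1 -> NoDup l2 -> NoDup (list_prod l1 l2).
Proof.
  induction 1 as [|a l1 Ha Hl1 IH]; intros H2; simpl; [constructor |].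
  apply NoDup_app; auto.
  - apply FinFun.Injective_map_NoDup; auto. intros x y E; injection E; auto.
  - intros p Hp1 Hp2. apply in_map_iff in Hp1. destruct Hp1 as [y [<- _]].
    apply in_prod_iff in Hp2. tauto.
Qed.

Lemma Zpair_eq_dec (p q : Z * Z) : {p = q} + {p <> q}.
Proof. decide equality; apply Z.eq_dec. Defined.

Definition zsquare (N : nat) : list (Z * Z) := list_prod (zrange N) (zrange N).

Lemma In_zsquare N p : In p (zsquare N) <->
  (- Z.of_nat N <= fst p <= Z.of_nat N /\ - Z.of_nat N <= snd p <= Z.of_nat N)%Z.
Proof. destruct p; unfold zsquare; rewrite in_prod_iff, !In_zrange; simpl; tauto. Qed.
Lemma NoDup_zsquare N : NoDup (zsquare N).
Proof. apply NoDup_list_prod; apply NoDup_zrange. Qed.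

Lemma Ccv_unique u l1 l2 : Ccv u l1 -> Ccv u l2 -> l1 = l2.
Proof. intros [H1 H2] [H3 H4]. apply CC_eq; eapply UL_sequence; eauto. Qed.
Lemma Ccv_ext u w l : (forall n, u n = w n) -> Ccv u l -> Ccv w l.
Proof.
  intros E [H1 H2]; split; intros eps He;
    [destruct (H1 eps He) as [N HN] | destruct (H2 eps He) as [N HN]];
    exists N; intros n Hn; rewrite <- E; auto.
Qed.
Lemma Ccv_sub u w l1 l2 : Ccv u l1 -> Ccv w l2 -> Ccv (fun n => u n - w n) (l1 - l2).
Proof. intros [H1 H2] [H3 H4]; split; simpl; apply CV_minus; auto. Qed.
Lemma Ccv_mul u w l1 l2 : Ccv u l1 -> Ccv w l2 -> Ccv (fun n => u n * w n) (l1 * l2).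
Proof.
  intros [H1 H2] [H3 H4]; split; simpl;
    [apply CV_minus | apply CV_plus]; apply CV_mult; auto.
Qed.

Lemma Un_cv_close (u w e : nat -> R) L :
  (forall n, Rabs (u n - w n) <= e n)%R -> Un_cv e 0 -> Un_cv w L -> Un_cv u L.
Proof.
  intros Hb He Hw eps Heps.
  destruct (He (eps / 2)%R) as [N1 HN1]; [lra |].
  destruct (Hw (eps / 2)%R) as [N2 HN2]; [lra |].
  exists (max N1 N2). intros n Hn.
  specialize (HN1 n ltac:(lia)). specialize (HN2 n ltac:(lia)). specialize (Hb n).
  unfold R_dist in *. rewrite Rminus_0_r in HN1.
  replace (u n - L)%R with ((u n - w n) + (w n - L))%R by ring.
  pose proof (Rabs_triang (u n - w n) (w n - L)). pose proof (Rle_abs (e n)). lra.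
Qed.

Lemma Ccv_close u w e L :
  (forall n, Cnorm1 (u n - w n) <= e n)%R -> Un_cv e 0 -> Ccv w L -> Ccv u L.
Proof.
  intros Hb He [H1 H2]; split; eapply Un_cv_close; eauto; intros n;
    eapply Rle_trans; [| apply (Hb n) | | apply (Hb n)];
    [apply (Rabs_Re_le (u n - w n)) | apply (Rabs_Im_le (u n - w n))].
Qed.

Lemma Un_cv_subseq (u : nat -> R) l (phi : nat -> nat) :
  (forall n, (n <= S (phi n))%nat) -> Un_cv u l -> Un_cv (fun n => u (phi n)) l.
Proof.
  intros Hp H eps He. destruct (H eps He) as [N HN]. exists (S N). intros n Hn.
  apply HN. specialize (Hp n). lia.
Qed.

Lemma rsum_zrange_cv (mu : Z -> R) M :
  (forall k, 0 <= mu k)%R -> (forall N, rsum mu (zrange N) <= M)%R ->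
  { L | Un_cv (fun N => rsum mu (zrange N)) L }.
Proof.
  intros H0 HM. apply growing_cv.
  - intros n. rewrite rsum_zrange_S.
    pose proof (H0 (Z.of_nat (S n))). pose proof (H0 (- Z.of_nat (S n))%Z). lra.
  - exists M. intros x [n ->]. auto.
Qed.

Lemma Ccv_cauchy (u : nat -> CC) :
  (forall eps, (eps > 0)%R -> exists N, forall n m, (n >= N)%nat -> (m >= N)%nat ->
     (Cnorm1 (u n - u m) < eps)%R) ->
  exists L, Ccv u L.
Proof.
  intros Hu.
  destruct (R_complete (fun N => Re (u N))) as [lr Hr].
  { intros eps He. destruct (Hu eps He) as [N HN]. exists N. intros n m Hn Hm.
    pose proof (Rabs_Re_le (u n - u m)) as Hle. specialize (HN n m Hn Hm).
    cbn [Re Im Csub Cadd Copp] in Hle. unfold R_dist, Rminus. lra. }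
  destruct (R_complete (fun N => Im (u N))) as [li Hi].
  { intros eps He. destruct (Hu eps He) as [N HN]. exists N. intros n m Hn Hm.
    pose proof (Rabs_Im_le (u n - u m)) as Hle. specialize (HN n m Hn Hm).
    cbn [Re Im Csub Cadd Copp] in Hle. unfold R_dist, Rminus. lra. }
  exists (mkC lr li). split; auto.
Qed.

Lemma lsum_zrange_cv (g : Z -> CC) (mu : Z -> R) M :
  (forall k, Cnorm1 (g k) <= mu k)%R -> (forall N, rsum mu (zrange N) <= M)%R ->
  exists L, Ccv (fun N => lsum g (zrange N)) L.
Proof.
  intros Hg HM.
  assert (H0 : forall k, (0 <= mu k)%R) by (intros k; pose proof (Cnorm1_ge0 (g k)); specialize (Hg k); lra).
  destruct (rsum_zrange_cv mu M H0 HM) as [P HP].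
  pose proof (CV_Cauchy _ (exist _ P HP)) as HC.
  assert (Hstep : forall m n, (m <= n)%nat ->
    (Cnorm1 (lsum g (zrange n) - lsum g (zrange m)) <= rsum mu (zrange n) - rsum mu (zrange m))%R).
  { intros m n Hmn. apply (Cnorm1_lsum_sub_le Z.eq_dec); auto using NoDup_zrange, incl_refl, incl_zrange. }
  apply Ccv_cauchy. intros eps He. destruct (HC eps He) as [N HN]. exists N. intros n m Hn Hm.
  specialize (HN n m Hn Hm). unfold R_dist in HN.
  destruct (le_lt_dec m n) as [Hmn|Hnm].
  - pose proof (Hstep m n Hmn). pose proof (Rle_abs (rsum mu (zrange n) - rsum mu (zrange m))). lra.
  - pose proof (Hstep n m ltac:(lia)).
    replace (lsum g (zrange n) - lsum g (zrange m)) with (- (lsum g (zrange m) - lsum g (zrange n))) by ring.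
    rewrite Cnorm1_opp, Rabs_minus_sym in *.
    pose proof (Rle_abs (rsum mu (zrange m) - rsum mu (zrange n))). lra.
Qed.

Lemma rsum_zsquare_gap_cv0 (al be : Z -> R) Ma Mb :
  (forall k, 0 <= al k)%R -> (forall k, 0 <= be k)%R ->
  (forall N, rsum al (zrange N) <= Ma)%R -> (forall N, rsum be (zrange N) <= Mb)%R ->
  Un_cv (fun N => rsum (fun p => al (fst p) * be (snd p))%R (zsquare (2 * N + 1))
                  - rsum (fun p => al (fst p) * be (snd p))%R (zsquare (N - 1)))%R 0%R.
Proof.
  intros Hal Hbe HMa HMb.
  destruct (rsum_zrange_cv al Ma Hal HMa) as [Pa HPa], (rsum_zrange_cv be Mb Hbe HMb) as [Pb HPb].
  set (sq := fun M => rsum (fun p => al (fst p) * be (snd p))%R (zsquare M)).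
  assert (Hsq : Un_cv sq (Pa * Pb)).
  { apply (Un_cv_ext (fun M => rsum al (zrange M) * rsum be (zrange M))%R).
    - intros; symmetry; apply rsum_prod.
    - apply CV_mult; auto. }
  replace 0%R with (Pa * Pb - Pa * Pb)%R by ring.
  apply CV_minus; [apply (Un_cv_subseq sq _ (fun N => 2 * N + 1)%nat) |
                   apply (Un_cv_subseq sq _ (fun N => N - 1)%nat)]; auto; intros; lia.
Qed.

Lemma exp_le x y : (x <= y)%R -> (exp x <= exp y)%R.
Proof. intros [H|H]; [left; apply exp_increasing; auto | subst; lra]. Qed.

(* Completing the square. *)
Lemma quadratic_le_linear a b c : (0 < a)%R -> forall t : R,
  (- a * t * t + b * t + c <= (c + (Rabs b + 1) * (Rabs b + 1) / (4 * a)) - Rabs t)%R.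
Proof.
  intros Ha t.
  assert (Hbt : (b * t <= Rabs b * Rabs t)%R) by (rewrite <- Rabs_mult; apply Rle_abs).
  assert (Ht2 : (t * t = Rabs t * Rabs t)%R) by (unfold Rabs; destruct (Rcase_abs t); ring).
  set (s := Rabs t) in *. set (B := (Rabs b + 1)%R).
  assert (Hsq : ((c + B * B / (4 * a)) - s - (- a * s * s + (B - 1) * s + c)
                 = a * (s - B / (2 * a)) * (s - B / (2 * a)))%R) by (field; lra).
  assert (0 <= a * (s - B / (2 * a)) * (s - B / (2 * a)))%R.
  { rewrite Rmult_assoc. apply Rmult_le_pos; [lra |]. apply Rle_0_sqr. }
  assert (a * t * t = a * s * s)%R by (rewrite !Rmult_assoc, Ht2; ring).
  unfold B in *. nra.
Qed.

Lemma rsum_zrange_exp_abs N :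
  (rsum (fun k => exp (- Rabs (IZR k))) (zrange N) <= 1 + 2 * exp (-1) / (1 - exp (-1)))%R.
Proof.
  set (r := exp (-1)).
  assert (Hr1 : (r < 1)%R) by (unfold r; rewrite <- exp_0; apply exp_increasing; lra).
  assert (Hr0 : (0 < r)%R) by apply exp_pos.
  assert (Hpow : forall n, exp (- INR n) = (r ^ n)%R).
  { induction n as [|n IHn]; [simpl; rewrite Ropp_0, exp_0; auto |].
    rewrite S_INR. simpl pow. rewrite <- IHn. unfold r. rewrite <- exp_plus. f_equal. ring. }
  assert (Hgeom : forall n, rsum (fun k => exp (- Rabs (IZR k))) (zrange n)
                            = (1 + 2 * r * (1 - r ^ n) / (1 - r))%R).
  { induction n as [|n IH].
    - unfold zrange, rsum; simpl. rewrite Rabs_R0, Ropp_0, exp_0. field. lra.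
    - rewrite rsum_zrange_S, IH, opp_IZR, Rabs_Ropp, <- INR_IZR_INZ,
        Rabs_right by (apply Rle_ge, pos_INR).
      rewrite Hpow. simpl. field. lra. }
  rewrite Hgeom. pose proof (pow_le r N (Rlt_le _ _ Hr0)).
  assert (2 * r * (1 - r ^ N) / (1 - r) <= 2 * r / (1 - r))%R.
  { unfold Rdiv. apply Rmult_le_compat_r; [left; apply Rinv_0_lt_compat; lra | nra]. }
  lra.
Qed.

Lemma Cexp_gaussian_summable (E : Z -> CC) a b c :
  (0 < a)%R -> (forall k, Re (E k) = - a * IZR k * IZR k + b * IZR k + c)%R ->
  exists M, forall N, (rsum (fun k => Cnorm1 (Cexp (E k))) (zrange N) <= M)%R.
Proof.
  intros Ha HE. set (K := (c + (Rabs b + 1) * (Rabs b + 1) / (4 * a))%R).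
  exists (2 * exp K * (1 + 2 * exp (-1) / (1 - exp (-1))))%R. intros N.
  eapply Rle_trans.
  - apply rsum_le with (h := fun k => (2 * exp K * exp (- Rabs (IZR k)))%R).
    intros k _. eapply Rle_trans; [apply Cnorm1_Cexp |].
    rewrite Rmult_assoc, <- exp_plus. apply Rmult_le_compat_l; [lra |].
    apply exp_le. rewrite HE. pose proof (quadratic_le_linear a b c Ha (IZR k)). unfold K. lra.
  - rewrite rsum_scal. apply Rmult_le_compat_l.
    + pose proof (exp_pos K). lra.
    + apply rsum_zrange_exp_abs.
Qed.

(* (k + l, k - l - 1) and (k + l, k - l) parametrise the pairs (n, m) with
   n + m odd, resp. even. *)
Definition pair_odd_sum (q : Z * Z) : Z * Z := (fst q + snd q, fst q - snd q - 1)%Z.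
Definition pair_even_sum (q : Z * Z) : Z * Z := (fst q + snd q, fst q - snd q)%Z.

Definition zsquare_by_parity (N : nat) : list (Z * Z) :=
  map pair_odd_sum (zsquare N) ++ map pair_even_sum (zsquare N).

Lemma NoDup_zsquare_by_parity N : NoDup (zsquare_by_parity N).
Proof.
  apply NoDup_app.
  - apply FinFun.Injective_map_NoDup; [| apply NoDup_zsquare].
    intros [a b] [c d] E. injection E; intros. f_equal; lia.
  - apply FinFun.Injective_map_NoDup; [| apply NoDup_zsquare].
    intros [a b] [c d] E. injection E; intros. f_equal; lia.
  - intros p H1 H2. apply in_map_iff in H1, H2.
    destruct H1 as [[a b] [<- _]], H2 as [[c d] [E _]]. injection E; intros. lia.
Qed.

Lemma incl_zsquare_by_parity N : incl (zsquare_by_parity N) (zsquare (2 * N + 1)).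
Proof.
  intros p. unfold zsquare_by_parity. rewrite in_app_iff, !in_map_iff.
  intros [[[a b] [<- H]] | [[a b] [<- H]]]; apply In_zsquare in H; apply In_zsquare; simpl in *; lia.
Qed.

Lemma incl_zsquare_pred N : incl (zsquare (N - 1)) (zsquare_by_parity N).
Proof.
  intros [n m]. rewrite In_zsquare. simpl. intros H.
  unfold zsquare_by_parity. rewrite in_app_iff, !in_map_iff.
  destruct (Z.Even_or_Odd (n + m + 1)) as [[k Hk] | [k Hk]]; [left | right];
    exists (k, (n - k)%Z); (split; [unfold pair_odd_sum, pair_even_sum; simpl; f_equal; lia |]);
    apply In_zsquare; simpl; lia.
Qed.

Lemma theta_partial_lsum tau z N : theta_partial tau z N = lsum (theta_term tau z) (zrange N).
Proof. unfold theta_partial, lsum, zrange. rewrite map_map. reflexivity. Qed.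

Ltac unfold_re_im := unfold Csub, Cadd, Copp, Cmul, Cpi, Ci, ZtoC, RtoC; cbn [Re Im].

Lemma Cexp_odd_pi w : Cexp (Cpi * Ci * ZtoC (2 * w + 1)) = - CC1.
Proof.
  assert (Hre : Re (Cpi * Ci * ZtoC (2 * w + 1)) = 0%R) by (unfold_re_im; ring).
  assert (Him : Im (Cpi * Ci * ZtoC (2 * w + 1)) = (2 * (IZR w * PI) + PI)%R)
    by (unfold_re_im; rewrite plus_IZR, mult_IZR; ring).
  unfold Cexp at 1. rewrite Hre, Him, exp_0.
  rewrite neg_cos, cos_2a_sin, neg_sin, sin_2a, sin_eq_0_1 by (exists w; auto).
  apply CC_eq; simpl; ring.
Qed.

Section ThetaRelation.
Variable tau : CC.
Hypothesis Htau : (0 < Im tau)%R.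

Definition theta_exponent (z : CC) (n : Z) : CC :=
  Cpi * Ci * tau * ((ZtoC n + RtoC (/ 2)) * (ZtoC n + RtoC (/ 2))) +
  ZtoC 2 * Cpi * Ci * (ZtoC n + RtoC (/ 2)) * (z + RtoC (/ 2)).

(* Theta series of period 2 tau with integer and half-integer characteristic. *)
Definition theta2_int_term (z : CC) (k : Z) : CC :=
  Cexp (ZtoC 2 * Cpi * Ci * tau * (ZtoC k * ZtoC k) + ZtoC 4 * Cpi * Ci * ZtoC k * z
        + ZtoC 2 * Cpi * Ci * ZtoC k).
Definition theta2_half_term (z : CC) (l : Z) : CC :=
  Cexp (Cpi * Ci * tau * (ZtoC (2 * l + 1) * ZtoC (2 * l + 1)) * RtoC (/ 2)
        + ZtoC 2 * Cpi * Ci * ZtoC (2 * l + 1) * z).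

Lemma theta_term_summable z :
  exists M, forall N, (rsum (fun k => Cnorm1 (theta_term tau z k)) (zrange N) <= M)%R.
Proof.
  apply (Cexp_gaussian_summable (theta_exponent z) (PI * Im tau)
           (- PI * Im tau - 2 * PI * Im z) (- PI * Im tau / 4 - PI * Im z)).
  - pose proof PI_RGT_0. nra.
  - intros k. unfold theta_exponent. unfold_re_im. field.
Qed.
Lemma theta2_int_summable z :
  exists M, forall N, (rsum (fun k => Cnorm1 (theta2_int_term z k)) (zrange N) <= M)%R.
Proof.
  eapply (Cexp_gaussian_summable _ (2 * PI * Im tau) (- 4 * PI * Im z) 0).
  - pose proof PI_RGT_0. nra.
  - intros k. unfold_re_im. field.
Qed.
Lemma theta2_half_summable z :
  exists M, forall N, (rsum (fun k => Cnorm1 (theta2_half_term z k)) (zrange N) <= M)%R.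
Proof.
  eapply (Cexp_gaussian_summable _ (2 * PI * Im tau) (- 2 * PI * Im tau - 4 * PI * Im z)
            (- PI * Im tau / 2 - 2 * PI * Im z)).
  - pose proof PI_RGT_0. nra.
  - intros k. unfold_re_im. rewrite plus_IZR, mult_IZR. field.
Qed.

Lemma theta_partial_cv z : exists L, Ccv (theta_partial tau z) L.
Proof.
  destruct (theta_term_summable z) as [M HM].
  destruct (lsum_zrange_cv (theta_term tau z) (fun k => Cnorm1 (theta_term tau z k)) M) as [L HL];
    auto using Rle_refl.
  exists L. apply (Ccv_ext (fun N => lsum (theta_term tau z) (zrange N))); auto.
  intros; symmetry; apply theta_partial_lsum.
Qed.

Lemma theta_eq_lim z L : Ccv (theta_partial tau z) L -> theta tau z = - L.
Proof.
  intros H. unfold theta. f_equal. apply (Ccv_unique (theta_partial tau z)); auto.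
  apply epsilon_spec, theta_partial_cv.
Qed.

Definition theta2_int (z : CC) : CC :=
  epsilon (inhabits CC0) (Ccv (fun N => lsum (theta2_int_term z) (zrange N))).
Definition theta2_half (z : CC) : CC :=
  epsilon (inhabits CC0) (Ccv (fun N => lsum (theta2_half_term z) (zrange N))).

Lemma theta2_int_cv z : Ccv (fun N => lsum (theta2_int_term z) (zrange N)) (theta2_int z).
Proof.
  unfold theta2_int. apply epsilon_spec. destruct (theta2_int_summable z) as [M HM].
  apply (lsum_zrange_cv _ (fun k => Cnorm1 (theta2_int_term z k)) M); auto using Rle_refl.
Qed.
Lemma theta2_half_cv z : Ccv (fun N => lsum (theta2_half_term z) (zrange N)) (theta2_half z).
Proof.
  unfold theta2_half. apply epsilon_spec. destruct (theta2_half_summable z) as [M HM].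
  apply (lsum_zrange_cv _ (fun k => Cnorm1 (theta2_half_term z k)) M); auto using Rle_refl.
Qed.

Lemma theta_term_pair_odd_sum x y k l :
  theta_term tau (x + y) (k + l) * theta_term tau (x - y) (k - l - 1)
  = theta2_int_term x k * theta2_half_term y l.
Proof.
  unfold theta_term, theta2_int_term, theta2_half_term. rewrite <- !Cexp_add. f_equal.
  apply CC_eq; unfold_re_im; repeat rewrite ?plus_IZR, ?minus_IZR, ?mult_IZR; field.
Qed.

Lemma theta_term_pair_even_sum x y k l :
  theta_term tau (x + y) (k + l) * theta_term tau (x - y) (k - l)
  = - (theta2_half_term x k * theta2_int_term y l).
Proof.
  unfold theta_term, theta2_int_term, theta2_half_term. rewrite <- !Cexp_add.
  transitivity (Cexp (Cpi * Ci * ZtoC (2 * (k - l) + 1)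
    + (Cpi * Ci * tau * (ZtoC (2 * k + 1) * ZtoC (2 * k + 1)) * RtoC (/ 2)
       + ZtoC 2 * Cpi * Ci * ZtoC (2 * k + 1) * x
       + (ZtoC 2 * Cpi * Ci * tau * (ZtoC l * ZtoC l) + ZtoC 4 * Cpi * Ci * ZtoC l * y
          + ZtoC 2 * Cpi * Ci * ZtoC l)))).
  - f_equal. apply CC_eq; unfold_re_im; repeat rewrite ?plus_IZR, ?minus_IZR, ?mult_IZR; field.
  - rewrite Cexp_add, Cexp_odd_pi. ring.
Qed.

Lemma lsum_zsquare_by_parity x y N :
  lsum (fun p => theta_term tau (x + y) (fst p) * theta_term tau (x - y) (snd p))
       (zsquare_by_parity N)
  = lsum (theta2_int_term x) (zrange N) * lsum (theta2_half_term y) (zrange N)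
    - lsum (theta2_half_term x) (zrange N) * lsum (theta2_int_term y) (zrange N).
Proof.
  unfold zsquare_by_parity, zsquare. rewrite lsum_app, !lsum_map.
  rewrite <- !lsum_prod. unfold Csub. rewrite <- lsum_opp. f_equal; apply lsum_ext_in; intros [k l] _.
  - apply theta_term_pair_odd_sum.
  - apply theta_term_pair_even_sum.
Qed.

(* Over [zsquare_by_parity N] the product series has the partial sums of
   A(x) B(y) - B(x) A(y); this index set lies between the squares of radius N - 1
   and 2N + 1, so it differs from [-N, N]^2 by a tail of an absolutely convergent
   double series. *)
Lemma theta_riemann_relation : riemann_relation (theta tau).
Proof.
  exists theta2_int, theta2_half. intros x y.
  set (a := theta_term tau (x + y)). set (b := theta_term tau (x - y)).
  destruct (theta_partial_cv (x + y)) as [La HLa], (theta_partial_cv (x - y)) as [Lb HLb].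
  rewrite (theta_eq_lim _ La HLa), (theta_eq_lim _ Lb HLb).
  replace (- La * - Lb) with (La * Lb) by ring.
  assert (Hab : Ccv (fun N => lsum a (zrange N) * lsum b (zrange N)) (La * Lb)).
  { apply Ccv_mul; eapply Ccv_ext; eauto; intros; apply theta_partial_lsum. }
  destruct (theta_term_summable (x + y)) as [Ma HMa], (theta_term_summable (x - y)) as [Mb HMb].
  eapply Ccv_unique; [exact Hab |].
  eapply Ccv_close;
    [| apply (rsum_zsquare_gap_cv0 (fun k => Cnorm1 (a k)) (fun k => Cnorm1 (b k)) Ma Mb);
       auto using Cnorm1_ge0
     | apply Ccv_sub; apply Ccv_mul; auto using theta2_int_cv, theta2_half_cv].
  intros N. cbv beta. rewrite <- lsum_zsquare_by_parity.
  replace (lsum a (zrange N) * lsum b (zrange N))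
    with (lsum (fun p => a (fst p) * b (snd p)) (zsquare N)) by apply lsum_prod.
  apply (Cnorm1_lsum_sub_le Zpair_eq_dec); auto using NoDup_zsquare, NoDup_zsquare_by_parity,
    incl_zsquare_by_parity, incl_zsquare_pred.
  - intros p. rewrite !In_zsquare. lia.
  - intros p. rewrite !In_zsquare. lia.
  - intros p. apply Cnorm1_mul.
Qed.
End ThetaRelation.

Lemma fval_riemann_relation fk tau : (0 < Im tau)%R -> riemann_relation (fval fk tau).
Proof.
  intros Htau. destruct fk; [apply theta_riemann_relation; auto | apply Csin_riemann_relation].
Qed.

Lemma length_bits J l : In l (bits J) -> length l = J.
Proof.
  revert l; induction J as [|J IH]; simpl; intros l H; [destruct H as [<- | []]; auto |].
  apply in_app_iff in H.
  destruct H as [H | H]; apply in_map_iff in H; destruct H as [l' [<- H]]; simpl; f_equal; auto.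
Qed.

Lemma ones_cons b l : ones (b :: l) = (b2Z b + ones l)%Z.
Proof. unfold ones. destruct b; cbn [filter length b2Z]; lia. Qed.

Lemma ones_cons_eqb b l j : (ones (b :: l) =? j)%Z = (ones l =? j - b2Z b)%Z.
Proof.
  rewrite ones_cons.
  destruct (Z.eqb_spec (b2Z b + ones l) j), (Z.eqb_spec (ones l) (j - b2Z b)); auto; lia.
Qed.

Lemma ones_bound l : (0 <= ones l <= Z.of_nat (length l))%Z.
Proof.
  induction l as [|b l IH]; [unfold ones; simpl; lia |].
  rewrite ones_cons. destruct b; cbn [length b2Z]; lia.
Qed.

Section FusedWeights.
Variables (f : CC -> CC) (eta Lam lam : CC).

Lemma Phi_eq l :
  Phi eta lam l = lam + ZtoC 2 * eta * ZtoC (2 * ones l - Z.of_nat (length l)).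
Proof.
  induction l as [|b l IH]; simpl Phi; [apply CC_eq; simpl; ring |].
  rewrite IH, ones_cons. cbn [length].
  repeat rewrite ?ZtoC_add, ?ZtoC_sub, ?ZtoC_mul, ?ZtoC_of_nat_S.
  destruct b; cbn [b2Z]; rewrite ?ZtoC_0, ?ZtoC_1, ZtoC_2; ring.
Qed.

Lemma Wcol_cons i b1 t1 i2 b2 t2 v : (0 <= i)%Z ->
  Wcol f eta Lam i (b1 :: t1) i2 (b2 :: t2) v lam
  = W1 f eta i b1 (i + b2Z b1 - b2Z b2) b2 v
       (lam + ZtoC 2 * eta * ZtoC (2 * ones t1 - Z.of_nat (length t1))) Lam
    * Wcol f eta Lam (i + b2Z b1 - b2Z b2) t1 i2 t2 (v + ZtoC 2 * eta) lam.
Proof.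
  intros Hi. unfold Wcol. cbn [Wcol_aux].
  replace (i <? 0)%Z with false by (symmetry; apply Z.ltb_ge; lia).
  rewrite Phi_eq. reflexivity.
Qed.

(* W_J(i, j; i + j - J, J | v, lam): all outgoing horizontal labels are 1. *)
Definition Wfused_full (J : nat) (i j : Z) (v : CC) : CC :=
  Wfused f eta Lam J i j (i + j - Z.of_nat J) (Z.of_nat J) v lam.

Lemma Wfused_full_out J i j v : (j < 0 \/ Z.of_nat J < j)%Z -> Wfused_full J i j v = CC0.
Proof.
  intros H. unfold Wfused_full, Wfused.
  rewrite (filter_ext_in _ (fun _ => false)), filter_false; [reflexivity |].
  intros l Hl. apply Z.eqb_neq.
  pose proof (ones_bound l). rewrite (length_bits J l Hl) in *. lia.
Qed.

(* Peeling off the bottom vertex of the column: its outgoing horizontal label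
   is 1, so the incoming one decides between W1(i,0;i-1,1) and W1(i,1;i,1). *)
Lemma Wfused_full_S J i j v : (0 <= i)%Z ->
  Wfused_full (S J) i j v =
    W1 f eta i false (i - 1) true v (lam + ZtoC 2 * eta * ZtoC (2 * j - Z.of_nat J)) Lam
      * Wfused_full J (i - 1) j (v + ZtoC 2 * eta)
  + W1 f eta i true i true v (lam + ZtoC 2 * eta * ZtoC (2 * (j - 1) - Z.of_nat J)) Lam
      * Wfused_full J i (j - 1) (v + ZtoC 2 * eta).
Proof.
  intros Hi. unfold Wfused_full, Wfused. rewrite !Nat2Z.id, !Nat.sub_diag.
  assert (E1 : (i + j - Z.of_nat (S J) = i - 1 + j - Z.of_nat J)%Z) by lia.
  assert (E2 : (i + j - Z.of_nat (S J) = i + (j - 1) - Z.of_nat J)%Z) by lia.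
  set (i2 := (i + j - Z.of_nat (S J))%Z) in *.
  cbn [repeat bits]. rewrite !app_nil_r, filter_app, !filter_map_swap, map_app, !map_map.
  rewrite Csum_app. change (Csum (map ?g ?l)) with (lsum g l).
  rewrite (filter_ext _ _ (fun l => ones_cons_eqb false l j)),
    (filter_ext _ _ (fun l => ones_cons_eqb true l j)). cbn [b2Z]. rewrite Z.sub_0_r.
  rewrite <- !lsum_scal. f_equal; apply lsum_ext_in; intros l Hl;
    apply filter_In in Hl; destruct Hl as [Hb Ho]; apply Z.eqb_eq in Ho;
    rewrite Wcol_cons, (length_bits J l Hb), Ho by lia; cbn [b2Z].
  - replace (i + 0 - 1)%Z with (i - 1)%Z by lia. rewrite E1. reflexivity.
  - replace (i + 1 - 1)%Z with i by lia. rewrite E2. reflexivity.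
Qed.

End FusedWeights.

Lemma riemann_relation_f0 f x : riemann_relation f -> f x <> CC0 -> f CC0 = CC0.
Proof.
  intros [A [B HR]] Hx.
  set (h := x * Cinv (CC1 + CC1)).
  assert (H2 : CC1 + CC1 <> CC0) by (rewrite <- ZtoC_2; apply ZtoC_neq0; lia).
  pose proof (HR h h) as Hh.
  replace (h + h) with x in Hh by (unfold h; field; auto).
  replace (h - h) with CC0 in Hh by ring.
  replace (A h * B h - B h * A h) with CC0 in Hh by ring.
  transitivity (Cinv (f x) * (f x * f CC0)); [field; auto | rewrite Hh; ring].
Qed.

(* With h = L/2, each of the six products is an instance of the Riemann relation;
   the identity is then a polynomial identity in the values of A and B. *)
Lemma riemann_relation_three_term f : riemann_relation f -> forall a0 b0 c0 L,
  f (a0 + b0) * f (a0 - b0 + L) * (f (c0 + L) * f c0) =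
  f b0 * f (L - b0) * (f (c0 + a0 + L) * f (c0 - a0))
  + f (a0 + L) * f a0 * (f (c0 + b0) * f (c0 - b0 + L)).
Proof.
  intros [A [B HR]] a0 b0 c0 L.
  assert (H2 : CC1 + CC1 <> CC0) by (rewrite <- ZtoC_2; apply ZtoC_neq0; lia).
  set (h := L * Cinv (CC1 + CC1)).
  assert (HL : L = h + h) by (unfold h; field; auto).
  assert (Hrel : forall x y p q, x = p + q -> y = p - q -> f x * f y = A p * B q - B p * A q)
    by (intros x y p q -> ->; apply HR).
  rewrite (Hrel (a0 + b0) (a0 - b0 + L) (a0 + h) (b0 - h)), (Hrel (c0 + L) c0 (c0 + h) h),
    (Hrel b0 (L - b0) h (b0 - h)), (Hrel (c0 + a0 + L) (c0 - a0) (c0 + h) (a0 + h)),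
    (Hrel (a0 + L) a0 (a0 + h) h), (Hrel (c0 + b0) (c0 - b0 + L) (c0 + h) (b0 - h));
    rewrite ?HL; try ring.
Qed.

Section ClosedForm.
Variables (f : CC -> CC) (eta Lam lam : CC).
Hypothesis Hrel : riemann_relation f.
Hypothesis Hf2eta : forall m : Z, m <> 0%Z -> f (ZtoC 2 * eta * ZtoC m) <> CC0.
Hypothesis Hflam : forall m : Z, f (lam + ZtoC 2 * eta * ZtoC m) <> CC0.

Definition generic_v (v : CC) : Prop := forall m : Z, f (eta * Lam - v + ZtoC 2 * eta * ZtoC m) <> CC0.

Lemma generic_v_shift v : generic_v v -> generic_v (v + ZtoC 2 * eta).
Proof.
  intros H m.
  replace (eta * Lam - (v + ZtoC 2 * eta) + ZtoC 2 * eta * ZtoC m)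
    with (eta * Lam - v + ZtoC 2 * eta * ZtoC (m - 1)) by (rewrite ZtoC_sub, ZtoC_1; ring).
  auto.
Qed.

Lemma f0 : f CC0 = CC0.
Proof. apply (riemann_relation_f0 f (ZtoC 2 * eta * ZtoC 1)); [| apply Hf2eta]; auto; lia. Qed.

Definition pochn (a : CC) (k : nat) : CC :=
  Cprod_nat k (fun m => f (a - ZtoC 2 * eta * ZtoC (Z.of_nat m))).

Lemma pochn_0 a : pochn a 0 = CC1.
Proof. reflexivity. Qed.

Lemma pochn_Sr a k : pochn a (S k) = pochn a k * f (a - ZtoC 2 * eta * ZtoC (Z.of_nat k)).
Proof. reflexivity. Qed.

Lemma pochn_Sl a k : pochn a (S k) = f a * pochn (a - ZtoC 2 * eta) k.
Proof.
  revert a. induction k as [|k IH]; intros a.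
  - rewrite pochn_Sr, !pochn_0. change (Z.of_nat 0) with 0%Z. rewrite ZtoC_0.
    replace (a - ZtoC 2 * eta * CC0) with a by ring. ring.
  - rewrite pochn_Sr, IH, pochn_Sr, ZtoC_of_nat_S.
    replace (a - ZtoC 2 * eta * (ZtoC (Z.of_nat k) + CC1))
      with (a - ZtoC 2 * eta - ZtoC 2 * eta * ZtoC (Z.of_nat k)) by ring.
    ring.
Qed.

Lemma pochn_shift a k : f (a - ZtoC 2 * eta * ZtoC (Z.of_nat k)) <> CC0 ->
  pochn a k = f a * pochn (a - ZtoC 2 * eta) k / f (a - ZtoC 2 * eta * ZtoC (Z.of_nat k)).
Proof. intros H. rewrite <- pochn_Sl, pochn_Sr. field. auto. Qed.

Lemma f_2eta_neq0 a m : a = ZtoC 2 * eta * ZtoC m -> m <> 0%Z -> f a <> CC0.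
Proof. intros ->; auto. Qed.
Lemma f_lam_neq0 a m : a = lam + ZtoC 2 * eta * ZtoC m -> f a <> CC0.
Proof. intros ->; auto. Qed.
Lemma f_v_neq0 v a m : generic_v v -> a = eta * Lam - v + ZtoC 2 * eta * ZtoC m -> f a <> CC0.
Proof. intros H ->; auto. Qed.

Lemma pochn_2eta_neq0 a z k : a = ZtoC 2 * eta * ZtoC z ->
  (forall m, (m < k)%nat -> z - Z.of_nat m <> 0)%Z -> pochn a k <> CC0.
Proof.
  intros -> H. apply Cprod_nat_neq0. intros m Hm.
  apply (f_2eta_neq0 _ (z - Z.of_nat m)); auto. rewrite ZtoC_sub; ring.
Qed.
Lemma pochn_lam_neq0 a z k : a = lam + ZtoC 2 * eta * ZtoC z -> pochn a k <> CC0.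
Proof.
  intros ->. apply Cprod_nat_neq0. intros m Hm.
  apply (f_lam_neq0 _ (z - Z.of_nat m)). rewrite ZtoC_sub; ring.
Qed.
Lemma pochn_v_neq0 v a z k : generic_v v -> a = eta * Lam - v + ZtoC 2 * eta * ZtoC z ->
  pochn a k <> CC0.
Proof.
  intros Hv ->. apply Cprod_nat_neq0. intros m Hm.
  apply (f_v_neq0 v _ (z - Z.of_nat m)); auto. rewrite ZtoC_sub; ring.
Qed.

(* The right-hand side of the proposition, with J - j = n and j = jn. *)
Definition Wclosed (n jn : nat) (i : Z) (v : CC) : CC :=
  let two := ZtoC 2 in
  let jC := ZtoC (Z.of_nat jn) in
  let JC := ZtoC (Z.of_nat (n + jn)) in
  Cinv (Cpow (f (two * eta)) n)
  * (pochn (two * eta * JC) (n + jn) / (pochn (two * eta * (JC - jC)) n * pochn (two * eta * jC) jn))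
  * ((pochn (two * eta * ZtoC i) n
      * pochn (two * eta * (ZtoC i + jC - JC) - eta * Lam - v) jn
      * pochn (two * eta * (Lam - ZtoC i - jC + JC)) n)
     / pochn (eta * Lam - v) (n + jn))
  * ((pochn (lam + two * eta * (ZtoC i + jC - JC) - eta * Lam - v) n
      * pochn (lam + two * eta * (ZtoC i + two * jC - JC - Lam - CC1)) jn)
     / (pochn (lam + two * eta * jC) n * pochn (lam + two * eta * (two * jC - JC - CC1)) jn)).

Definition W11 (k : Z) (v lam' : CC) : CC :=
  f (eta * (ZtoC 2 * ZtoC k - Lam) - v) * f (lam' + ZtoC 2 * eta * (ZtoC k - Lam))
  / (f (eta * Lam - v) * f lam').
Definition W01 (k : Z) (v lam' : CC) : CC :=
  f (lam' - v + eta * (ZtoC 2 * ZtoC k - ZtoC 2 - Lam)) * f (ZtoC 2 * eta * (Lam + CC1 - ZtoC k))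
  * f (ZtoC 2 * ZtoC k * eta) / (f (eta * Lam - v) * f lam' * f (ZtoC 2 * eta)).

Lemma W1_11 k v lam' : (0 <= k)%Z -> W1 f eta k true k true v lam' Lam = W11 k v lam'.
Proof.
  intros H. unfold W1, W11.
  replace (k <? 0)%Z with false by (symmetry; apply Z.ltb_ge; lia). rewrite Z.eqb_refl. reflexivity.
Qed.
Lemma W1_01 k v lam' : (1 <= k)%Z -> W1 f eta k false (k - 1) true v lam' Lam = W01 k v lam'.
Proof.
  intros H. unfold W1, W01.
  replace (k <? 0)%Z with false by (symmetry; apply Z.ltb_ge; lia).
  replace (1 <=? k)%Z with true by (symmetry; apply Z.leb_le; lia). rewrite Z.eqb_refl. reflexivity.
Qed.
Lemma W01_0 v lam' : W01 0 v lam' = CC0.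
Proof.
  unfold W01. rewrite ZtoC_0. replace (ZtoC 2 * CC0 * eta) with CC0 by ring.
  rewrite f0. unfold Cdiv. ring.
Qed.

Lemma Wclosed_0_0 i v : Wclosed 0 0 i v = CC1.
Proof. unfold Wclosed. cbv zeta. simpl Cpow. rewrite !pochn_0. field. apply CC1_neq0. Qed.

Lemma Wclosed_i0 n jn v : Wclosed (S n) jn 0 v = CC0.
Proof.
  unfold Wclosed. cbv zeta. rewrite (pochn_Sl (ZtoC 2 * eta * ZtoC 0)), ZtoC_0.
  replace (ZtoC 2 * eta * CC0) with CC0 at 1 by ring.
  rewrite f0. unfold Cdiv. ring.
Qed.

(* [field] only cancels syntactically equal atoms [f a], [pochn a k]: arguments
   that agree up to ring normalisation are identified first.  Each class is hidden
   behind a [set] once treated, so that every pair of arguments is compared once. *)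
Ltac hide_equal_args F x a :=
  lazymatch goal with
  | |- context [F ?b] =>
      tryif replace b with a by (rewrite ?ZtoC_2; ring)
      then (change (F a) with x; hide_equal_args F x a)
      else (let y := fresh "y" in set (y := F b); hide_equal_args F x a; subst y)
  | _ => idtac
  end.
Ltac identify_args F :=
  lazymatch goal with
  | |- context [F ?a] =>
      let x := fresh "x" in set (x := F a); hide_equal_args F x a; identify_args F; subst x
  | _ => idtac
  end.

Ltac push_ZtoC :=
  change (Z.of_nat 0) with 0%Z;
  repeat rewrite ?ZtoC_add, ?ZtoC_sub, ?ZtoC_opp, ?ZtoC_mul, ?ZtoC_of_nat_S, ?ZtoC_of_nat_add;
  rewrite ?ZtoC_0, ?ZtoC_1.
Ltac ZtoC_ring := push_ZtoC; rewrite ?ZtoC_2; ring.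

(* The integer m of an argument c + 2 eta m of f, as needed by the genericity
   hypotheses. *)
Ltac int_of_expr e :=
  lazymatch e with
  | ZtoC ?z => z
  | CC1 => constr:(1%Z)
  | CC0 => constr:(0%Z)
  | ?a + ?b => let x := int_of_expr a in let y := int_of_expr b in constr:((x + y)%Z)
  | ?a - ?b => let x := int_of_expr a in let y := int_of_expr b in constr:((x - y)%Z)
  | ?a * ?b => let x := int_of_expr a in let y := int_of_expr b in constr:((x * y)%Z)
  | - ?a => let x := int_of_expr a in constr:((- x)%Z)
  end.
Ltac coeff_2eta e :=
  lazymatch e with
  | ZtoC 2 * eta * ?E => int_of_expr E
  | ZtoC 2 * ?E * eta => int_of_expr E
  | ZtoC 2 * eta => constr:(1%Z)
  | ?a + ?b => let x := coeff_2eta a in let y := coeff_2eta b in constr:((x + y)%Z)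
  | ?a - ?b => let x := coeff_2eta a in let y := coeff_2eta b in constr:((x - y)%Z)
  | - ?a => let x := coeff_2eta a in constr:((- x)%Z)
  | _ => constr:(0%Z)
  end.

Ltac solve_neq0 :=
  lazymatch goal with
  | |- pochn ?a ?k <> CC0 =>
      let z := coeff_2eta a in
      first [ apply (pochn_lam_neq0 a z k); ZtoC_ring
            | eapply (pochn_v_neq0 _ a z k); [eassumption | ZtoC_ring]
            | apply (pochn_2eta_neq0 a z k); [ZtoC_ring | intros; lia] ]
  | |- f ?a <> CC0 =>
      let z := coeff_2eta a in
      first [ apply (f_lam_neq0 a z); ZtoC_ring
            | eapply (f_v_neq0 _ a z); [eassumption | ZtoC_ring]
            | apply (f_2eta_neq0 a z); [ZtoC_ring | lia] ]
  | |- Cpow _ _ <> CC0 => apply Cpow_neq0; solve_neq0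
  | |- CC1 <> CC0 => apply CC1_neq0
  | |- {| Re := R1; Im := R0 |} <> CC0 => apply CC1_neq0
  | |- _ * _ <> CC0 => apply Cmul_neq0; solve_neq0
  | |- Cinv _ <> CC0 => apply Cinv_neq0; solve_neq0
  end.

Lemma Wclosed_n0_S J i v : generic_v v ->
  Wclosed 0 (S J) i v
  = W11 i v (lam + ZtoC 2 * eta * ZtoC (Z.of_nat J)) * Wclosed 0 J i (v + ZtoC 2 * eta).
Proof.
  intros Hv. unfold Wclosed, W11. cbv zeta. rewrite !Nat.add_0_l, !pochn_0.
  rewrite !ZtoC_of_nat_S, !pochn_Sl.
  identify_args pochn. identify_args f.
  simpl Cpow. field. repeat split; solve_neq0.
Qed.

Lemma Wclosed_S_j0 J i v : generic_v v ->
  Wclosed (S J) 0 i v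
  = W01 i v (lam + ZtoC 2 * eta * ZtoC (- Z.of_nat J)) * Wclosed J 0 (i - 1) (v + ZtoC 2 * eta).
Proof.
  intros Hv. unfold Wclosed, W01. cbv zeta. rewrite !Nat.add_0_r, !pochn_0.
  push_ZtoC.
  rewrite (pochn_Sr (ZtoC 2 * eta * (Lam - _ - _ + _))), (pochn_Sr (lam + ZtoC 2 * eta * _)), !pochn_Sl.
  identify_args pochn. identify_args f.
  simpl Cpow. field. repeat split; solve_neq0.
Qed.

(* Both steps of the recursion meet in one instance of the three-term identity. *)
Lemma Wclosed_S_S n j i v : generic_v v ->
  Wclosed (S n) (S j) i v
  = W01 i v (lam + ZtoC 2 * eta * ZtoC (2 * Z.of_nat (S j) - Z.of_nat (n + S j)))
      * Wclosed n (S j) (i - 1) (v + ZtoC 2 * eta)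
    + W11 i v (lam + ZtoC 2 * eta * ZtoC (2 * Z.of_nat j - Z.of_nat (n + S j)))
      * Wclosed (S n) j i (v + ZtoC 2 * eta).
Proof.
  intros Hv. unfold Wclosed, W01, W11. cbv zeta.
  rewrite !Nat.add_succ_l, !Nat.add_succ_r.
  push_ZtoC.
  repeat rewrite (pochn_Sr (ZtoC 2 * eta * (Lam - _ - _ + _)) n).
  rewrite (pochn_Sr (ZtoC 2 * eta * _ - eta * Lam - (v + ZtoC 2 * eta)) j),
    (pochn_Sr (lam + ZtoC 2 * eta * _ - eta * Lam - (v + ZtoC 2 * eta)) n),
    (pochn_Sr (lam + ZtoC 2 * eta * ZtoC (Z.of_nat j)) n), !pochn_Sl.
  identify_args pochn.
  rewrite (pochn_shift (lam + ZtoC 2 * eta * (ZtoC (Z.of_nat j) + CC1)) n).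
  rewrite (pochn_shift (lam + ZtoC 2 * eta * (ZtoC 2 * (ZtoC (Z.of_nat j) + CC1)
             - (ZtoC (Z.of_nat n) + ZtoC (Z.of_nat j) + CC1) - CC1) - ZtoC 2 * eta) j).
  identify_args pochn.
  pose proof (riemann_relation_three_term f Hrel (ZtoC 2 * eta * (ZtoC (Z.of_nat j) + CC1))
    (ZtoC 2 * eta * (ZtoC (Z.of_nat n) + CC1))
    (ZtoC 2 * eta * (ZtoC i - ZtoC (Z.of_nat n) - CC1) - eta * Lam - v) lam) as Hthree.
  revert Hthree. identify_args f. intros Hthree.
  simpl Cpow. field [Hthree].
  all: repeat split; solve_neq0.
Qed.

(* Both sides obey the same two-term recursion, with a single term when n = 0 or
   jn = 0. *)
Lemma Wfused_full_eq_Wclosed J : forall v, generic_v v -> forall i, (0 <= i)%Z ->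
  forall n jn, (n + jn = J)%nat -> Wfused_full f eta Lam lam J i (Z.of_nat jn) v = Wclosed n jn i v.
Proof.
  induction J as [|J IH]; intros v Hv i Hi n jn Hnj.
  - assert (n = 0%nat) by lia. assert (jn = 0%nat) by lia. subst. rewrite Wclosed_0_0.
    unfold Wfused_full, Wfused, Wcol. simpl.
    replace (i <? 0)%Z with false by (symmetry; apply Z.ltb_ge; lia).
    replace (i =? i + 0 - 0)%Z with true by (symmetry; apply Z.eqb_eq; lia).
    apply CC_eq; simpl; ring.
  - rewrite Wfused_full_S by auto. pose proof (generic_v_shift v Hv) as Hv'.
    destruct jn as [|j]; [| destruct n as [|n]].
    + assert (n = S J) by lia. subst n.
      rewrite (Wfused_full_out f eta Lam lam J i (Z.of_nat 0 - 1)) by lia.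
      replace (2 * Z.of_nat 0 - Z.of_nat J)%Z with (- Z.of_nat J)%Z by lia.
      destruct (Z.eq_dec i 0) as [-> | Hi0].
      * rewrite Wclosed_i0. unfold W1. simpl. ring.
      * rewrite W1_01, (IH _ Hv' (i - 1)%Z ltac:(lia) J 0%nat), Wclosed_S_j0 by (auto; lia). ring.
    + assert (j = J) by lia. subst j.
      rewrite (Wfused_full_out f eta Lam lam J (i - 1) (Z.of_nat (S J))) by lia.
      replace (Z.of_nat (S J) - 1)%Z with (Z.of_nat J) by lia.
      replace (2 * Z.of_nat J - Z.of_nat J)%Z with (Z.of_nat J) by lia.
      rewrite W1_11, (IH _ Hv' _ Hi 0%nat J), Wclosed_n0_S by (auto; lia). ring.
    + assert (HJ : J = (n + S j)%nat) by lia. subst J.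
      replace (Z.of_nat (S j) - 1)%Z with (Z.of_nat j) by lia.
      rewrite W1_11, (IH _ Hv' _ Hi (S n) j), Wclosed_S_S by (auto; lia).
      destruct (Z.eq_dec i 0) as [-> | Hi0].
      * rewrite W01_0. unfold W1. simpl. ring.
      * rewrite W1_01, (IH _ Hv' (i - 1)%Z ltac:(lia) n (S j)) by (auto; lia). reflexivity.
Qed.
End ClosedForm.

Lemma poch_of_nat f eta a k : poch f eta a (Z.of_nat k) = pochn f eta a k.
Proof.
  unfold poch, pochn. replace (0 <=? Z.of_nat k)%Z with true by (symmetry; apply Z.leb_le; lia).
  rewrite Nat2Z.id. reflexivity.
Qed.

Lemma Cpowz_of_nat_sub c n jn : Cpowz c (Z.of_nat jn - Z.of_nat (n + jn)) = Cinv (Cpow c n).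
Proof.
  unfold Cpowz. destruct n as [|n].
  - rewrite Nat.add_0_l, Z.sub_diag. apply CC_eq; simpl; field.
  - replace (0 <=? Z.of_nat jn - Z.of_nat (S n + jn))%Z with false by (symmetry; apply Z.leb_gt; lia).
    do 3 f_equal. lia.
Qed.

Theorem proposition4p4 (fk : fkind) (eta tau Lam v lam : CC) (i : nat) (J : nat)
  (j : Z) :
  (0 < Im tau)%R ->
  (0 < J)%nat ->
  (* genericity: all denominators occurring below are nonzero *)
  (forall m : Z, m <> 0%Z -> fval fk tau (ZtoC 2 * eta * ZtoC m) <> CC0) ->
  (forall m : Z, fval fk tau (eta * Lam - v + ZtoC 2 * eta * ZtoC m) <> CC0) ->
  (forall m : Z, fval fk tau (lam + ZtoC 2 * eta * ZtoC m) <> CC0) ->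
  let f := fval fk tau in
  let JZ := Z.of_nat J in
  let iZ := Z.of_nat i in
  let two := ZtoC 2 in
  let jC := ZtoC j in
  let JC := ZtoC JZ in
  let iC := ZtoC iZ in
  ((j < 0)%Z \/ (JZ < j)%Z ->
     Wfused f eta Lam J iZ j (iZ + j - JZ) JZ v lam = CC0) /\
  ((0 <= j)%Z /\ (j <= JZ)%Z ->
     Wfused f eta Lam J iZ j (iZ + j - JZ) JZ v lam =
       Cpowz (f (two * eta)) (j - JZ)
       * (poch f eta (two * eta * JC) JZ
          / (poch f eta (two * eta * (JC - jC)) (JZ - j)
             * poch f eta (two * eta * jC) j))
       * ((poch f eta (two * eta * iC) (JZ - j)
           * poch f eta (two * eta * (iC + jC - JC) - eta * Lam - v) j
           * poch f eta (two * eta * (Lam - iC - jC + JC)) (JZ - j))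
          / poch f eta (eta * Lam - v) JZ)
       * ((poch f eta (lam + two * eta * (iC + jC - JC) - eta * Lam - v) (JZ - j)
           * poch f eta (lam + two * eta * (iC + two * jC - JC - Lam - CC1)) j)
          / (poch f eta (lam + two * eta * jC) (JZ - j)
             * poch f eta (lam + two * eta * (two * jC - JC - CC1)) j))).
Proof.
  intros Htau _ H2eta Hv Hlam. cbv zeta.
  change (Wfused (fval fk tau) eta Lam J (Z.of_nat i) j (Z.of_nat i + j - Z.of_nat J) (Z.of_nat J) v lam)
    with (Wfused_full (fval fk tau) eta Lam lam J (Z.of_nat i) j v).
  split; [apply Wfused_full_out |].
  intros [Hj0 HjJ].
  destruct (Z_of_nat_complete j Hj0) as [jn ->].
  destruct (Nat.le_exists_sub jn J ltac:(lia)) as [n [-> _]].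
  replace (Z.of_nat (n + jn) - Z.of_nat jn)%Z with (Z.of_nat n) by lia.
  rewrite (Wfused_full_eq_Wclosed _ _ _ _ (fval_riemann_relation fk tau Htau) H2eta Hlam
             (n + jn) v Hv (Z.of_nat i) ltac:(lia) n jn eq_refl).
  rewrite !poch_of_nat, Cpowz_of_nat_sub. reflexivity.
Qed.
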